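(* Let $n$ and $m$ be integers with $n\geq 2$ and $1\leq m\leq\binom{n}{2}$, and let $n'=\min\{\lfloor\frac{m+3}{2}\rfloor,n\}$. A two-terminal graph $G\in T_{n,m}$ is a $2$-uniformly most reliable two-terminal graph ($2$-UMRTTG) if and only if $G$ contains $A_{n',0}$ as a subgraph (as a two-terminal graph, i.e. with terminals corresponding to terminals).
   Context: All graphs are finite, simple and undirected. A two-terminal graph is a graph $G$ together with two distinguished vertices $s,t$ (the terminals). Two two-terminal graphs are isomorphic if there is a graph isomorphism between them mapping the set of terminals onto the set of terminals. $T_{n,m}$ denotes the set of all pairwise nonisomorphic two-terminal graphs with $n$ vertices and $m$ edges. For a positive integer $d$, a $d$-pathset of a two-terminal graph $G$ is a spanning subgraph of $G$ containing a path of length (number of edges) at most $d$ joining $s$ and $t$. For $\rho\in[0,1]$, $R_G^d(\rho)$ is the probability that the random spanning subgraph obtained from $G$ by deleting each edge independently with probability $\rho$ is a $d$-pathset. A graph $G\in T_{n,m}$ is a $d$-UMRTTG if $R_G^d(\rho)\geq R_H^d(\rho)$ for every $H\in T_{n,m}$ and every $\rho\in[0,1]$. For an integer $k\geq 2$, $A_{k,0}$ is the two-terminal graph with vertex set $\{s,t,v_3,\ldots,v_k\}$, terminals $s,t$, and edge set $\{st\}\cup\{sv_i,v_it:3\leq i\leq k\}$ (so $A_{2,0}$ is the single edge $st$). *)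

From HB Require Import structures.
From mathcomp Require Import all_boot all_order all_algebra.
From mathcomp Require Import reals.
Set Implicit Arguments. Unset Strict Implicit. Unset Printing Implicit Defensive.
Import Order.TTheory GRing.Theory Num.Theory.

Definition ttg (n : nat) (E : {set {set 'I_n}}) (s t : 'I_n) : Prop :=
  (forall e, e \in E -> #|e| = 2) /\ s != t.

(* F (a spanning subgraph, given by its edge set) contains a path of length
   (number of edges) at most d from s to t: a sequence of pairwise distinct
   vertices s = v_0, v_1, ..., v_k = t with k <= d and each {v_i, v_(i+1)} in F.
   The path v_1..v_k is encoded as a finite function 'I_k -> 'I_n. *)
Definition has_short_path (n : nat) (d : nat) (F : {set {set 'I_n}}) (s t : 'I_n) : bool :=
  [exists k : 'I_d.+1, [exists p : {ffun 'I_k -> 'I_n},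
     let q := [seq p i | i <- enum 'I_k] in
     [&& path (fun x y => [set x; y] \in F) s q, last s q == t & uniq (s :: q)]]].

Definition pathset (n d : nat) (E F : {set {set 'I_n}}) (s t : 'I_n) : bool :=
  (F \subset E) && has_short_path d F s t.

(* R_G^d(rho): probability that the random spanning subgraph obtained by
   deleting each edge independently with probability rho is a d-pathset. *)
Definition reliability (R : realType) (n d : nat) (E : {set {set 'I_n}}) (s t : 'I_n)
  (rho : R) : R :=
  \sum_(F : {set {set 'I_n}} | pathset d E F s t)
     (rho ^+ #|E :\: F| * (1 - rho) ^+ #|F|)%R.

Definition UMRTTG (R : realType) (n d : nat) (E : {set {set 'I_n}}) (s t : 'I_n) : Prop :=
  forall (E' : {set {set 'I_n}}) (s' t' : 'I_n),
    ttg E' s' t' -> #|E'| = #|E| ->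
    forall rho : R, (0 <= rho)%R -> (rho <= 1)%R ->
      (reliability d E' s' t' rho <= reliability d E s t rho)%R.

(* The two-terminal graph A_{k+2,0} on vertex set 'I_(k+2): terminals 0 and 1,
   edge {0,1}, and edges {0,i}, {i,1} for 2 <= i < k+2.  Its edges are exactly
   the pairs {x,y}, x != y, with x <= 1. *)
Definition A_edges (k : nat) : {set {set 'I_k.+2}} :=
  [set [set x; y] | x in 'I_k.+2, y in 'I_k.+2 & (x != y) && (x <= 1)%N].
Definition A_s (k : nat) : 'I_k.+2 := inord 0.
Definition A_t (k : nat) : 'I_k.+2 := inord 1.

Definition tt_subgraph (n k : nat) (E : {set {set 'I_n}}) (s t : 'I_n)
  (E' : {set {set 'I_k}}) (s' t' : 'I_k) : Prop :=
  exists f : 'I_k -> 'I_n,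
    [/\ injective f, [set f s'; f t'] = [set s; t] &
        forall e, e \in E' -> f @: e \in E].

From HB Require Import structures.
From mathcomp Require Import all_boot all_order all_algebra.
From mathcomp Require Import reals.
From mathcomp Require Import ring lra zify.

(* For d = 2 the reliability has a closed form.  A short s-t path uses either
   the edge st or the wedge s-v-t through a common neighbour v of s and t; the
   wedges of distinct common neighbours are edge-disjoint and avoid st, so if c
   is the number of common neighbours and b = 1 - (1 - rho)^2,
     R(rho) = 1 - (if st is an edge then rho else 1) * b^c.
   A graph with m edges has 2c + [st is an edge] <= m and c <= n - 2, and
   rho <= b, i.e. the edge st is worth at least a wedge.  Hence the failure
   probability is minimised for every rho simultaneously by the graphs containing
   st and n' - 2 common neighbours, which are exactly those containing A_{n',0};
   at rho = 1/2 the inequality rho < b is strict, so no other graph is optimal. *)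

Set Implicit Arguments.
Unset Strict Implicit.
Unset Printing Implicit Defensive.

Import Order.TTheory GRing.Theory Num.Theory.

Lemma finset_ind (T : finType) (P : {set T} -> Prop) :
  P set0 -> (forall (x : T) (A : {set T}), x \notin A -> P A -> P (x |: A)) ->
  forall A, P A.
Proof.
move=> P0 PU1 A; elim: {A}#|A| {-2}A (erefl #|A|) => [|k IHk] A cardA.
  by move/eqP: cardA; rewrite cards_eq0 => /eqP->.
have /card_gt0P[x xA] : (0 < #|A|)%N by rewrite cardA.
rewrite -(setD1K xA); apply: PU1; first by rewrite setD11.
by apply: IHk; move: cardA; rewrite (cardsD1 x) xA => -[].
Qed.

Lemma big_subsetU1 (T : finType) (V : nmodType) (x : T) (A : {set T})
    (G : {set T} -> V) : x \notin A ->
  (\sum_(B : {set T} | B \subset x |: A) G B =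
   \sum_(B : {set T} | B \subset A) (G B + G (x |: B)))%R.
Proof.
move=> xA; rewrite big_split (bigID (fun B : {set T} => x \in B)) /= addrC.
congr (_ + _)%R; first by apply: eq_bigl => B; rewrite -subsetD1 setU1K.
rewrite (reindex_onto (fun B : {set T} => x |: B) (fun B => B :\ x)); last first.
  by move=> B /andP[_ xB]; rewrite setD1K.
apply: eq_bigl => B; rewrite setU11 andbT.
apply/andP/idP => [[sxBxA /eqP xBB] | sBA].
  by rewrite -xBB -(setU1K xA) setSD.
have xB : x \notin B := contra (subsetP sBA x) xA.
by rewrite setUS // setU1K.
Qed.

Section EdgeSubsetProbability.

Local Open Scope ring_scope.

Variables (R : comPzRingType) (T : finType) (r : R).
Implicit Types (x : T) (A B C : {set T}) (P Q : pred {set T}).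

Definition weight (A B : {set T}) : R := r ^+ #|A :\: B| * (1 - r) ^+ #|B|.

Definition prob (A : {set T}) (P : pred {set T}) : R :=
  \sum_(B : {set T} | B \subset A) weight A B * (P B)%:R.

Lemma eq_prob A P Q :
  (forall B, B \subset A -> P B = Q B) -> prob A P = prob A Q.
Proof. by move=> PQ; apply: eq_bigr => B /PQ->. Qed.

Lemma prob_set0 P : prob set0 P = (P set0)%:R.
Proof.
rewrite /prob (big_pred1 set0) => [|B]; last by rewrite subset0.
by rewrite /weight set0D !cards0 !expr0 !mul1r.
Qed.

Lemma prob_setU1 x A P : x \notin A ->
  prob (x |: A) P = r * prob A P + (1 - r) * prob A (fun B => P (x |: B)).
Proof.
move=> xA; rewrite /prob big_subsetU1 // big_split !big_distrr /=.
congr (_ + _); apply: eq_bigr => B sBA; rewrite /weight.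
- have xB : x \notin B := contra (subsetP sBA x) xA.
  have xAB : x \notin A :\: B by rewrite inE negb_and xA orbT.
  by rewrite setDUl (setDidPl _) ?disjoints1 // cardsU1 xAB exprS !mulrA.
- have xB : x \notin B := contra (subsetP sBA x) xA.
  have -> : (x |: A) :\: (x |: B) = A :\: B.
    by apply/setP=> y; rewrite !inE; case: eqP => // ->; rewrite (negbTE xA) andbF.
  by rewrite cardsU1 xB exprS; ring.
Qed.

Lemma prob_predT A : prob A predT = 1.
Proof.
elim/finset_ind: A => [|x A xA IH]; first by rewrite prob_set0.
by rewrite prob_setU1 // IH; ring.
Qed.

Lemma prob_predC A P : prob A (predC P) = 1 - prob A P.
Proof.
rewrite -(prob_predT A) /prob -sumrB; apply: eq_bigr => B _ /=.
by case: (P B) => /=; ring.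
Qed.

Lemma prob_setU_and A B P Q : [disjoint A & B] ->
  prob (A :|: B) (fun C => P (C :&: A) && Q (C :&: B)) = prob A P * prob B Q.
Proof.
elim/finset_ind: B Q => [|x B xB IH] Q.
  rewrite setU0 prob_set0 /prob big_distrl /= => _; apply: eq_bigr => C sCA.
  by rewrite setI0 (setIidPl sCA); case: (P C); case: (Q set0) => /=; ring.
rewrite disjoint_sym disjoints_subset subUset sub1set inE => /andP[xA].
rewrite -disjoints_subset disjoint_sym => dAB.
have xAB : x \notin A :|: B by rewrite inE negb_or xA.
rewrite setUCA !prob_setU1 // mulrDr !(mulrCA (prob A P)) -!IH //.
congr (_ * _ + _ * _); apply: eq_prob => C sC.
  have xC : x \notin C := contra (subsetP sC x) xAB.
  by rewrite setIUr (disjoint_setI0 (_ : [disjoint C & [set x]])) ?set0U //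
    disjoint_sym disjoints1.
by rewrite -setUIr setIUl (disjoint_setI0 (_ : [disjoint [set x] & A]))
  ?set0U ?disjoints1.
Qed.

Lemma prob_restrict A B P : A \subset B ->
  prob B (fun C => P (C :&: A)) = prob A P.
Proof.
move=> sAB; have dA : [disjoint A & B :\: A].
  by rewrite disjoint_sym disjoints_subset setDE subsetIr.
rewrite -{1}(setID B A) (setIidPr sAB) -[RHS]mulr1 -(prob_predT (B :\: A)).
by rewrite -prob_setU_and //; apply: eq_prob => C _; rewrite andbT.
Qed.

Lemma prob_notin x A :
  prob (A :&: [set x]) (fun B => x \notin B) = if x \in A then r else 1.
Proof.
have [xA | xA] := boolP (x \in A).
  rewrite (setIidPr _) ?sub1set // -[[set x]]setU0 prob_setU1 ?inE //.
  by rewrite !prob_set0 !inE eqxx /=; ring.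
by rewrite disjoint_setI0 ?prob_set0 ?inE // disjoint_sym disjoints1.
Qed.

End EdgeSubsetProbability.

Section PathsOfLengthTwo.

Variables (n : nat) (s t : 'I_n).
Hypothesis st_neq : s != t.
Implicit Types (u v : 'I_n) (X : {set 'I_n}) (e : {set 'I_n}) (E F : {set {set 'I_n}}).

Definition common_nbrs E : {set 'I_n} :=
  [set v in ~: [set s; t] | ([set s; v] \in E) && ([set v; t] \in E)].

Definition wedge v : {set {set 'I_n}} := [set [set s; v]; [set v; t]].

Definition wedges X : {set {set 'I_n}} := \bigcup_(v in X) wedge v.

Definition no_wedge X F : bool :=
  [forall v in X, ~~ (([set s; v] \in F) && ([set v; t] \in F))].

Lemma has_short_path2E F :
  has_short_path 2 F s t = ([set s; t] \in F) || (common_nbrs F != set0).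
Proof.
apply/idP/idP.
  case/existsP=> -[k lt_k3] /existsP[p] /=.
  have := size_map p (enum 'I_k); rewrite size_enum_ord.
  move: [seq p i | i <- enum 'I_k] => q size_q /and3P[path_q /eqP last_q uniq_q].
  case: q size_q path_q last_q uniq_q => [|a [|b [|c q]]] //= size_q.
  - by move=> _ t_s; move: st_neq; rewrite t_s eqxx.
  - by rewrite andbT => st_F <-; rewrite st_F.
  - rewrite andbT => /andP[sa ab] b_t; subst b.
    rewrite !inE !negb_or => /andP[/andP[sa' _] /andP[ta _]].
    apply/orP; right; apply/set0Pn; exists a.
    by rewrite !inE negb_or eq_sym sa' ta sa ab.
  - by have := lt_k3; rewrite -size_q.
case/orP=> [st_F | /set0Pn[v]].
  apply/existsP; exists (Ordinal (isT : 1 < 3)); apply/existsP.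
  exists [ffun _ => t]; rewrite /= enum_ordSl enum_ord0 /= ffunE st_F eqxx /=.
  by rewrite !inE andbT.
rewrite !inE negb_or => /and3P[/andP[vs vt] sv vt_F].
apply/existsP; exists (Ordinal (isT : 2 < 3)); apply/existsP.
exists [ffun i : 'I_2 => if val i == 0 then v else t].
rewrite /= enum_ordSl enum_ordSl enum_ord0 /= !ffunE /= sv vt_F eqxx /=.
by rewrite !inE !negb_or eq_sym vs st_neq vt.
Qed.

Lemma common_nbrs_sub E : common_nbrs E \subset ~: [set s; t].
Proof. by apply/subsetP=> v; rewrite inE => /andP[]. Qed.

Lemma mem_wedge v e : e \in wedge v -> v \in e.
Proof. by rewrite !inE => /orP[]/eqP->; rewrite !inE eqxx ?orbT. Qed.

Lemma wedge_mem_eq u v e : u \notin [set s; t] -> e \in wedge v -> u \in e -> u = v.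
Proof.
rewrite !inE negb_or => /andP[us ut].
by case/orP=> /eqP->; rewrite !inE ?(negbTE us) ?(negbTE ut) ?orbF => /eqP.
Qed.

Lemma wedge_edges_neq v : v \notin [set s; t] -> [set s; v] != [set v; t].
Proof.
move=> v_st; apply/eqP=> sv_vt; have := set21 s v.
rewrite sv_vt !inE (negbTE st_neq) orbF eq_sym => /eqP vs.
by move: v_st; rewrite vs set21.
Qed.

Lemma card_wedge v : v \notin [set s; t] -> #|wedge v| = 2.
Proof. by move/wedge_edges_neq; rewrite cards2 => ->. Qed.

Section InnerSet.

Variable X : {set 'I_n}.
Hypothesis X_inner : X \subset ~: [set s; t].

Lemma inner_notin v : v \in X -> v \notin [set s; t].
Proof. by move/(subsetP X_inner); rewrite inE. Qed.

Lemma disjoint_wedges v : v \notin X -> [disjoint wedge v & wedges X].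
Proof.
move=> vX; rewrite disjoint_subset; apply/subsetP=> e ev.
apply/bigcupP=> -[u uX eu].
by move: vX; rewrite -(wedge_mem_eq (inner_notin uX) ev (mem_wedge eu)) uX.
Qed.

Lemma st_notin_wedges : [set s; t] \notin wedges X.
Proof.
apply/bigcupP=> -[v vX /mem_wedge v_st].
by move: (inner_notin vX); rewrite v_st.
Qed.

End InnerSet.

Lemma wedgesU1 v X : wedges (v |: X) = wedge v :|: wedges X.
Proof. by rewrite /wedges bigcup_setU big_set1. Qed.

Lemma card_wedges X : X \subset ~: [set s; t] -> #|wedges X| = (2 * #|X|)%N.
Proof.
elim/finset_ind: X => [|v X vX IH]; first by rewrite /wedges big_set0 !cards0.
rewrite subUset sub1set inE => /andP[v_st X_inner].
rewrite wedgesU1 cardsU (disjoint_setI0 (disjoint_wedges X_inner vX)) cards0 subn0.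
by rewrite card_wedge // IH // cardsU1 vX; lia.
Qed.

Lemma wedges_common_nbrs_sub E : wedges (common_nbrs E) \subset E.
Proof.
apply/subsetP=> e /bigcupP[v]; rewrite inE => /and3P[_ sv vt].
by rewrite !inE => /orP[]/eqP->.
Qed.

Lemma no_wedgeU1 v X F : v \notin X ->
  no_wedge (v |: X) F =
  ~~ (([set s; v] \in F) && ([set v; t] \in F)) && no_wedge X F.
Proof. by move=> vX; rewrite /no_wedge -!big_andE big_setU1. Qed.

Lemma no_wedge_restrict X F : no_wedge X (F :&: wedges X) = no_wedge X F.
Proof.
apply: eq_forallb_in => v vX; have sub_vX := subsetP (bigcup_sup _ vX).
by rewrite !inE !sub_vX ?set21 ?set22 ?andbT.
Qed.

Lemma no_short_path2E E F : F \subset E ->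
  ~~ has_short_path 2 F s t = ([set s; t] \notin F) && no_wedge (common_nbrs E) F.
Proof.
move=> sFE; rewrite has_short_path2E // negb_or negbK; congr (_ && _).
apply/eqP/forall_inP => [nbrs0 v vC | no_nbrs].
  apply/negP=> sv_vt; have : v \in common_nbrs F.
    by move: vC; rewrite !inE => /andP[-> _].
  by rewrite nbrs0 inE.
apply/setP=> v; rewrite !inE; apply/negbTE/negP => /andP[v_st sv_vt].
have vC : v \in common_nbrs E.
  by case/andP: sv_vt => sv vt; rewrite !inE v_st !(subsetP sFE).
by move: (no_nbrs v vC); rewrite sv_vt.
Qed.

Section Reliability.

Local Open Scope ring_scope.

Variables (R : comPzRingType) (r : R).

Definition wedge_fail : R := 1 - (1 - r) ^+ 2.

Definition failure E : R :=
  (if [set s; t] \in E then r else 1) * wedge_fail ^+ #|common_nbrs E|.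

Lemma prob_wedge v : v \notin [set s; t] ->
  prob r (wedge v) (fun F => ~~ (([set s; v] \in F) && ([set v; t] \in F))) =
  wedge_fail.
Proof.
move/wedge_edges_neq => sv_vt.
rewrite /wedge -[[set [set v; t]]]setU0 !prob_setU1 ?inE ?(negbTE sv_vt) //.
rewrite !prob_set0 !inE !eqxx (negbTE sv_vt) eq_sym (negbTE sv_vt) /wedge_fail /=.
by ring.
Qed.

Lemma prob_no_wedge X : X \subset ~: [set s; t] ->
  prob r (wedges X) (no_wedge X) = wedge_fail ^+ #|X|.
Proof.
elim/finset_ind: X => [|v X vX IH].
  by rewrite /wedges big_set0 prob_set0 cards0 /no_wedge -big_andE big_set0.
rewrite subUset sub1set inE => /andP[v_st X_inner].
rewrite wedgesU1 cardsU1 vX add1n exprS -IH // -(prob_wedge v_st) -prob_setU_and;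
  last exact: disjoint_wedges.
apply: eq_prob => F _; rewrite no_wedgeU1 // no_wedge_restrict.
by rewrite !in_setI /wedge set21 set22 !andbT.
Qed.

End Reliability.

Local Open Scope ring_scope.

Lemma reliability_prob (R : realType) d E (r : R) :
  reliability d E s t r = prob r E (fun F => has_short_path d F s t).
Proof.
rewrite /reliability /pathset /prob big_mkcondr; apply: eq_bigr => F _.
by case: has_short_path; rewrite ?mulr1 ?mulr0.
Qed.

Lemma reliability2E (R : realType) E (r : R) :
  reliability 2 E s t r = 1 - failure r E.
Proof.
set C := common_nbrs E; set S := E :&: [set [set s; t]].
have dSW : [disjoint S & wedges C].
  apply: disjointWl (subsetIr _ _) _.
  by rewrite disjoints1 st_notin_wedges // common_nbrs_sub.
have sSW_E : S :|: wedges C \subset E.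
  by rewrite subUset subsetIl wedges_common_nbrs_sub.
rewrite reliability_prob -[prob r E _](subKr 1) -prob_predC.
rewrite /failure -prob_notin -prob_no_wedge ?common_nbrs_sub //.
rewrite -prob_setU_and // -(prob_restrict _ _ sSW_E); congr (1 - _).
apply: eq_prob => F sFE /=; rewrite (no_short_path2E sFE) -setIA setUK.
rewrite -setIA [_ :|: wedges C]setUC setUK no_wedge_restrict; congr (_ && _).
by rewrite !inE eqxx andbT; case: (boolP (_ \in F)) => //= /(subsetP sFE)->.
Qed.

End PathsOfLengthTwo.

Lemma exists_subset_card (T : finType) (A : {set T}) k :
  (k <= #|A|)%N -> exists2 B : {set T}, B \subset A & #|B| = k.
Proof.
rewrite -bin_gt0 -cards_draws => /card_gt0P[B].
by rewrite inE => /andP[sBA /eqP]; exists B.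
Qed.

Lemma exists_between_card (T : finType) (A B : {set T}) k :
  A \subset B -> (#|A| <= k <= #|B|)%N ->
  exists C : {set T}, [/\ A \subset C, C \subset B & #|C| = k].
Proof.
move=> sAB /andP[Ak kB].
have [D sD cardD] : exists2 D : {set T}, D \subset B :\: A & #|D| = (k - #|A|)%N.
  by apply: exists_subset_card; rewrite cardsD (setIidPr sAB); lia.
have dAD : [disjoint A & D].
  by apply: disjointWr sD _; rewrite disjoint_sym disjoints_subset setDE subsetIr.
exists (A :|: D); split; first exact: subsetUl.
  by rewrite subUset sAB (subset_trans sD (subsetDl _ _)).
by rewrite cardsU (disjoint_setI0 dAD) cards0 cardD; lia.
Qed.

Lemma A_sE K : A_s K = 0 :> nat. Proof. by rewrite /A_s inordK. Qed.

Lemma A_tE K : A_t K = 1 :> nat. Proof. by rewrite /A_t inordK. Qed.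

Lemma mem_A_edges K (x y : 'I_K.+2) :
  x != y -> (x <= 1)%N -> [set x; y] \in A_edges K.
Proof. by move=> xy x1; apply/imset2P; exists x y; rewrite ?inE ?xy. Qed.

Lemma A_edgesP K e : e \in A_edges K ->
  exists x y : 'I_K.+2, [/\ e = [set x; y], x != y & (x <= 1)%N].
Proof.
by case/imset2P=> x y _; rewrite !inE => /and3P[_ xy x1] ->; exists x, y.
Qed.

Section Counting.

Variables (n : nat) (s t : 'I_n).
Hypothesis st_neq : s != t.
Implicit Types (E : {set {set 'I_n}}).

Lemma card_inner : #|~: [set s; t]| = (n - 2)%N.
Proof. by rewrite cardsCs setCK card_ord cards2 st_neq. Qed.

Lemma card_common_nbrs_le E : (#|common_nbrs s t E| <= n - 2)%N.
Proof. by rewrite -card_inner subset_leq_card ?common_nbrs_sub. Qed.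

Lemma card_edges_ge E :
  (2 * #|common_nbrs s t E| + ([set s; t] \in E) <= #|E|)%N.
Proof.
have C_inner := common_nbrs_sub s t E; have W_E := wedges_common_nbrs_sub s t E.
rewrite -(card_wedges st_neq C_inner).
have [stE | _] := boolP ([set s; t] \in E); last by rewrite addn0 subset_leq_card.
have sub : [set s; t] |: wedges s t (common_nbrs s t E) \subset E.
  by rewrite subUset sub1set stE W_E.
by move: (subset_leq_card sub); rewrite cardsU1 st_notin_wedges // addnC.
Qed.

Lemma tt_subgraph_A_common_nbrs E K :
  tt_subgraph E s t (A_edges K) (A_s K) (A_t K) ->
  [set s; t] \in E /\ (K <= #|common_nbrs s t E|)%N.
Proof.
case=> f [f_inj f_st f_E].
have f_edge (x y : 'I_K.+2) : x != y -> (x <= 1)%N -> [set f x; f y] \in E.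
  by move=> xy x1; have := f_E _ (mem_A_edges xy x1); rewrite imsetU1 imset_set1.
have st'_neq : A_s K != A_t K by rewrite -val_eqE /= A_sE A_tE.
split; first by rewrite -f_st f_edge // A_sE.
have terminal_edge u (i : 'I_K.+2) :
    u \in [set s; t] -> (1 < i)%N -> [set u; f i] \in E.
  by rewrite -f_st => /set2P[]-> i_gt1; apply: f_edge;
    rewrite ?A_sE ?A_tE // -val_eqE /= ?A_sE ?A_tE; lia.
pose g (j : 'I_K) : 'I_n := f (inord j.+2).
have g_inj : injective g.
  move=> j j' /f_inj /(congr1 val); rewrite /= !inordK ?ltnS ?ltn_ord //.
  by move=> [] /val_inj.
have g_nbrs : g @: setT \subset common_nbrs s t E.
  apply/subsetP=> _ /imsetP[j _ ->]; rewrite /g; set i : 'I_K.+2 := inord j.+2.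
  have i_gt1 : (1 < i)%N by rewrite /i inordK // !ltnS ltn_ord.
  rewrite inE [[set f i; t]]setUC !terminal_edge ?set21 ?set22 // !andbT.
  by rewrite -f_st !inE !(inj_eq f_inj) -!val_eqE /= A_sE A_tE; lia.
by apply: leq_trans (subset_leq_card g_nbrs); rewrite card_imset // cardsT card_ord.
Qed.

Lemma common_nbrs_tt_subgraph_A E K :
  [set s; t] \in E -> (K <= #|common_nbrs s t E|)%N ->
  tt_subgraph E s t (A_edges K) (A_s K) (A_t K).
Proof.
move=> stE K_C; set l := enum (common_nbrs s t E).
have nbrs_l k : (k < K)%N -> nth s l k \in common_nbrs s t E.
  by move=> k_K; rewrite -mem_enum mem_nth // -cardE; apply: leq_trans K_C.
have uniq_stl : uniq [:: s, t & l].
  by rewrite /= /l enum_uniq !inE !mem_enum !inE !eqxx (negbTE st_neq) orbT.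
pose f (i : 'I_K.+2) : 'I_n := nth s [:: s, t & l] i.
have size_stl (i : 'I_K.+2) : (i < size [:: s, t & l])%N.
  by apply: leq_trans (ltn_ord i) _; rewrite /= /l -cardE !ltnS.
exists f; split; last 1 first.
- move=> _ /A_edgesP[x [y [-> xy x1]]]; rewrite imsetU1 imset_set1 /f.
  case: x xy x1 => [[|[|x]] x_lt] //; case: y => [[|[|y]] y_lt] // xy _ /=.
  - have /nbrs_l : (y < K)%N by rewrite -2!ltnS.
    by rewrite !inE => /and3P[].
  - by rewrite setUC.
  - have /nbrs_l : (y < K)%N by rewrite -2!ltnS.
    by rewrite setUC !inE => /and3P[].
- by move=> i j /eqP; rewrite nth_uniq // => /eqP /val_inj.
- by rewrite /f A_sE A_tE.
Qed.

Lemma tt_subgraph_AE E K :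
  tt_subgraph E s t (A_edges K) (A_s K) (A_t K) <->
  [set s; t] \in E /\ (K <= #|common_nbrs s t E|)%N.
Proof.
split; first exact: tt_subgraph_A_common_nbrs.
by case; apply: common_nbrs_tt_subgraph_A.
Qed.

Lemma exists_optimal_ttg m K :
  (2 * K + 1 <= m <= 'C(n, 2))%N -> (K <= n - 2)%N ->
  exists D, [/\ ttg D s t, #|D| = m, [set s; t] \in D &
                (K <= #|common_nbrs s t D|)%N].
Proof.
move=> /andP[Km mC] Kn.
have [X X_inner cardX] :
    exists2 X : {set 'I_n}, X \subset ~: [set s; t] & #|X| = K.
  by apply: exists_subset_card; rewrite card_inner.
set pairs := [set e : {set 'I_n} | #|e| == 2].
have wedge_pairs : [set s; t] |: wedges s t X \subset pairs.
  rewrite subUset sub1set inE cards2 st_neq /=.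
  apply/subsetP=> e /bigcupP[v /(inner_notin X_inner)].
  rewrite !inE negb_or => /andP[vs vt]; rewrite eq_sym in vs.
  by case/orP=> /eqP->; rewrite cards2 ?vs ?vt.
have card_bounds : (#|[set s; t] |: wedges s t X| <= m <= #|pairs|)%N.
  rewrite cardsU1 st_notin_wedges // card_wedges // cardX card_draws card_ord.
  by rewrite add1n -addn1 Km.
have [D [sWD sDP cardD]] := exists_between_card wedge_pairs card_bounds.
exists D; split=> //.
- by split=> // e /(subsetP sDP); rewrite inE => /eqP.
- by rewrite (subsetP sWD) ?setU11.
rewrite -cardX subset_leq_card //; apply/subsetP=> v vX.
rewrite inE (subsetP X_inner) //= !(subsetP sWD) // !inE; apply/orP; right;
  by apply/bigcupP; exists v; rewrite ?inE ?eqxx ?orbT.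
Qed.

End Counting.

Section FailureBounds.

Local Open Scope ring_scope.

Variables (R : realFieldType) (n : nat) (s t : 'I_n) (K : nat).
Implicit Types (r : R) (E : {set {set 'I_n}}).

Lemma wedge_fail_ge r : 0 <= r -> r <= 1 -> r <= wedge_fail r <= 1.
Proof. by move=> r0 r1; rewrite /wedge_fail expr2; apply/andP; split; nra. Qed.

Lemma wedge_fail_gt r : 0 < r -> r < 1 -> r < wedge_fail r < 1.
Proof. by move=> r0 r1; rewrite /wedge_fail expr2; apply/andP; split; nra. Qed.

Lemma failure_le_optimal r E : 0 <= r -> r <= 1 ->
  [set s; t] \in E -> (K <= #|common_nbrs s t E|)%N ->
  failure s t r E <= r * wedge_fail r ^+ K.
Proof.
move=> r0 r1 stE K_C; have /andP[rb b1] := wedge_fail_ge r0 r1.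
by rewrite /failure stE ler_wpM2l // ler_wiXn2l // (le_trans r0).
Qed.

Lemma failure_ge_optimal r E : 0 <= r -> r <= 1 ->
  (#|common_nbrs s t E| <= K + ([set s; t] \notin E))%N ->
  r * wedge_fail r ^+ K <= failure s t r E.
Proof.
move=> r0 r1; have /andP[rb b1] := wedge_fail_ge r0 r1; have b0 := le_trans r0 rb.
rewrite /failure; case: ifP => _; rewrite /= ?addn0 ?addn1 => C_K.
  by rewrite ler_wpM2l // ler_wiXn2l.
rewrite mul1r; apply: (le_trans _ (ler_wiXn2l b0 b1 C_K)); rewrite exprS.
by rewrite ler_wpM2r // exprn_ge0.
Qed.

Lemma failure_le_optimal_inv r E : 0 < r -> r < 1 ->
  (#|common_nbrs s t E| <= K + ([set s; t] \notin E))%N ->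
  failure s t r E <= r * wedge_fail r ^+ K ->
  [set s; t] \in E /\ (K <= #|common_nbrs s t E|)%N.
Proof.
move=> r0 r1; have /andP[rb b1] := wedge_fail_gt r0 r1; have b0 := lt_trans r0 rb.
rewrite /failure; case: ifP => stE; rewrite /= ?addn0 ?addn1 => C_K fail_le.
  by rewrite -(ler_iXn2l b0 b1) -(ler_pM2l r0).
have : wedge_fail r ^+ K.+1 <= r * wedge_fail r ^+ K.
  by apply: le_trans fail_le; rewrite mul1r ler_wiXn2l ?ltW.
by rewrite exprS ler_pM2r ?exprn_gt0 // leNgt rb.
Qed.

End FailureBounds.

Unset Implicit Arguments.

Theorem proposition1 (R : realType) (n m : nat) (E : {set {set 'I_n}}) (s t : 'I_n) :
  (2 <= n)%N -> (1 <= m)%N -> (m <= 'C(n, 2))%N ->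
  ttg E s t -> #|E| = m ->
  (UMRTTG R 2 E s t <->
   tt_subgraph E s t (A_edges (minn ((m + 3) %/ 2) n - 2)) (A_s _) (A_t _)).
Proof.
move=> n_ge2 m_gt0 m_le [_ st_neq] cardE; rewrite tt_subgraph_AE //.
set K := (minn ((m + 3) %/ 2) n - 2)%N.
(* [K] is the largest c with 2c + 1 <= m and c <= n - 2. *)
have nbrs_le (E' : {set {set 'I_n}}) (s' t' : 'I_n) : s' != t' -> #|E'| = m ->
    (#|common_nbrs s' t' E'| <= K + ([set s'; t'] \notin E'))%N.
  move=> st' cardE'; have := card_edges_ge st' E'.
  have := card_common_nbrs_le st' E'.
  by rewrite cardE' /K; case: (_ \in E') => /=; lia.
split=> [optimal | [stE K_E] E' s' t' [_ st'] cardE' r r0 r1].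
- have [m_bounds K_n] : (2 * K + 1 <= m <= 'C(n, 2))%N /\ (K <= n - 2)%N.
    by rewrite /K; split; lia.
  have [D [ttgD cardD stD K_D]] := exists_optimal_ttg st_neq m_bounds K_n.
  have [half0 half1] : (0 < 1 / 2 :> R)%R /\ (1 / 2 < 1 :> R)%R by split; lra.
  have := optimal D s t ttgD (etrans cardD (esym cardE)) _ (ltW half0) (ltW half1).
  rewrite !reliability2E // lerD2l lerN2 => fail_le.
  apply: (failure_le_optimal_inv half0 half1 (nbrs_le E s t st_neq cardE)).
  exact: le_trans fail_le (failure_le_optimal (ltW half0) (ltW half1) stD K_D).
- rewrite !reliability2E // lerD2l lerN2.
  apply: le_trans (failure_le_optimal r0 r1 stE K_E) _.
  exact: failure_ge_optimal r0 r1 (nbrs_le E' s' t' st' (etrans cardE' cardE)).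
Qed.
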